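(* Let $\beta$ be a Pisot number, let $l\in(-1,0]$, $r=l+1$, and let $d$ be the $(-\beta,l)$-expansion. Then $d(x)$ is eventually periodic for every $x\in[l,r)\cap\mathbb{Q}(\beta)$.
   Context: For $\beta>1$ and $l\in(-1,0]$, $r=l+1$, the $(-\beta,l)$-transformation is $T:[l,r)\to[l,r)$, $T(x)=-\beta x-\lfloor -\beta x-l\rfloor$. The $(-\beta,l)$-expansion of $x\in[l,r)$ is the integer sequence $d(x)=x_1x_2x_3\cdots$ with $x_i=\lfloor -\beta T^{i-1}(x)-l\rfloor$. A Pisot number is a real algebraic integer $>1$ all of whose other conjugates have modulus $<1$. *)

From HB Require Import structures.
From mathcomp Require Import all_boot all_order all_algebra.
From mathcomp Require Import reals.
From mathcomp.real_closed Require Import complex.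
Set Implicit Arguments. Unset Strict Implicit. Unset Printing Implicit Defensive.
Import Order.TTheory GRing.Theory Num.Theory.
Local Open Scope ring_scope.
Local Open Scope complex_scope.

Definition pisot (R : realType) (beta : R) : Prop :=
  1 < beta /\
  exists p : {poly int},
    p \is monic /\
    irreducible_poly (map_poly (intr : int -> rat) p) /\
    root (map_poly (intr : int -> R) p) beta /\
    forall z : R[i], root (map_poly (intr : int -> R[i]) p) z ->
      z != beta%:C -> `|z| < 1.

Definition in_Qbeta (R : realType) (beta x : R) : Prop :=
  exists p q : {poly rat},
    (map_poly (ratr : rat -> R) q).[beta] != 0 /\
    x = (map_poly (ratr : rat -> R) p).[beta] / (map_poly (ratr : rat -> R) q).[beta].

Definition negT (R : realType) (beta l x : R) : R :=
  - beta * x - (Num.floor (- beta * x - l))%:~R.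

(* The i-th digit (0-indexed: digit n is x_{n+1}) of the (-beta,l)-expansion:
   x_{n+1} = floor(-beta T^n(x) - l). *)
Definition negdigit (R : realType) (beta l x : R) (n : nat) : int :=
  Num.floor (- beta * iter n (negT beta l) x - l).

Definition eventually_periodic (u : nat -> int) : Prop :=
  exists N k : nat, (0 < k)%N /\ forall n : nat, (N <= n)%N -> u (n + k)%N = u n.

From HB Require Import structures.
From mathcomp Require Import all_boot all_order all_algebra.
From mathcomp Require Import separable.
From mathcomp Require Import reals.
From mathcomp.real_closed Require Import complex.
From mathcomp Require Import zify ring lra.
Import Order.TTheory GRing.Theory Num.Theory.
Local Open Scope ring_scope.

(* Write x = P(beta)/Q(beta) with integer polynomials P, Q, and let p be the
   minimal polynomial of beta, of degree d. Since T(y) = -beta y - digit, every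
   T^n(x) Q(beta) is B_n(beta) for an integer polynomial B_n of degree < d, obtained
   by iterating B |-> -X B - c_n Q modulo p. The values B_n(beta) = T^n(x) Q(beta)
   are bounded because T^n(x) stays in [l, l + 1); at every other root z of p the
   recursion B_{n+1}(z) = -z B_n(z) - c_n Q(z) with |z| < 1 and bounded digits keeps
   B_n(z) bounded. The roots of p are distinct, so inverting their Vandermonde
   matrix bounds the coefficients of B_n: the B_n range over a finite set, and a
   repetition B_i = B_j forces T^i(x) = T^j(x). *)

Lemma finType_seq_repeats {F : finType} (u : nat -> F) :
  exists i j, (i < j)%N /\ u i = u j.
Proof.
pose v (k : 'I_#|F|.+1) := u k.
have /injectivePn[a [b neq_ab eq_ab]] : ~~ injectiveb v.
  by apply/injectiveP => /leq_card; rewrite card_ord ltnn.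
case: (ltngtP a b) => [ltab | ltba | /val_inj eqab].
- by exists a, b.
- by exists b, a.
- by rewrite eqab eqxx in neq_ab.
Qed.

Lemma bounded_int_polys_repeat {d N : nat} {B : nat -> {poly int}} :
  (forall n, size (B n) <= d)%N -> (forall n i, `|(B n)`_i| <= N%:Z) ->
  exists i j, (i < j)%N /\ B i = B j.
Proof.
move=> size_B coef_B.
pose code n : {ffun 'I_d -> 'I_(N + N).+1} :=
  [ffun k : 'I_d => inord (absz ((B n)`_k + N%:Z))].
have code_inj m n : code m = code n -> B m = B n.
  move=> eq_code; apply/polyP => k; case: (ltnP k d) => [ltkd | ledk]; last first.
    by rewrite !nth_default // (leq_trans (size_B _) ledk).
  have shift (a : int) : `|a| <= N%:Z -> Posz (absz (a + N%:Z)) = a + N%:Z /\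
                                  (absz (a + N%:Z)%R < (N + N).+1)%N.
    by rewrite ler_norml => /andP[? ?]; rewrite gez0_abs; lia.
  have [[eqm ltm] [eqn ltn]] := (shift _ (coef_B m k), shift _ (coef_B n k)).
  have := congr1 (fun f : {ffun _ -> _} => val (f (Ordinal ltkd))) eq_code.
  by rewrite !ffunE /= !inordK // => /(congr1 Posz); rewrite eqm eqn => /addIr.
have [i [j [ltij eq_code]]] := finType_seq_repeats code.
by exists i, j; split; last exact: code_inj.
Qed.

Lemma irreducible_separable (F : numFieldType) (q : {poly F}) :
  irreducible_poly q -> separable_poly q.
Proof.
move=> [size_q irr_q].
have q_neq0 : q != 0 by rewrite -size_poly_gt0 ltnW.
have dq_neq0 : q^`() != 0.
  apply/eqP => dq0.
  have := congr1 (fun r : {poly F} => r`_((size q).-2)) dq0.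
  rewrite /= coef_deriv coef0.
  have -> : ((size q).-2).+1 = (size q).-1 by case: (size q) size_q => [|[|k]].
  by move/eqP; rewrite mulrn_eq0 -lead_coefE lead_coef_eq0 (negbTE q_neq0) orbF
     => /eqP; case: (size q) size_q => [|[|k]].
rewrite unlock /coprimep; apply: contraT => gcd_ne1.
have /andP[_ q_dvd_gcd] := irr_q _ gcd_ne1 (dvdp_gcdl q q^`()).
have /(dvdp_leq dq_neq0) := dvdp_trans q_dvd_gcd (dvdp_gcdr q q^`()).
by rewrite leqNgt lt_size_deriv.
Qed.

Lemma coef_from_evals {C : fieldType} {rs : seq C} : uniq rs ->
  exists W : 'M[C]_(size rs), forall A : {poly C}, (size A <= size rs)%N ->
    forall k : 'I_(size rs), A`_k = \sum_(j < size rs) A.[rs`_j] * W j k.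
Proof.
move=> uniq_rs; set d := size rs.
pose V := Vandermonde d (\row_(j < d) rs`_j).
have V_unit : V \in unitmx.
  rewrite unitmxE unitfE det_Vandermonde; apply/prodf_neq0 => i _.
  apply/prodf_neq0 => j ltij; rewrite !mxE subr_eq0.
  by rewrite nth_uniq // neq_ltn ltij orbT.
exists (invmx V) => A size_A k.
pose cA : 'rV[C]_d := \row_k A`_k.
have cAV : cA *m V = \row_j A.[rs`_j].
  apply/rowP => j; rewrite !mxE (horner_coef_wide _ size_A).
  by apply: eq_bigr => i _; rewrite !mxE.
have := congr1 (fun M : 'rV_d => M 0 k) (mulmxK V_unit cA).
by rewrite cAV !mxE => <-; apply: eq_bigr => j _; rewrite mxE.
Qed.

Local Open Scope complex_scope.

Lemma normc_ge0 {R : rcfType} (z : R[i]) : 0 <= Normc.normc z.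
Proof. by case: z => a b; rewrite /Normc.normc sqrtr_ge0. Qed.

Lemma normc_real {R : rcfType} (r : R) : Normc.normc r%:C = `|r|.
Proof. by rewrite /Normc.normc /= expr0n addr0 sqrtr_sqr. Qed.

Lemma normc_intr {R : rcfType} (k : int) : Normc.normc (k%:~R : R[i]) = `|k|%:~R.
Proof. by rewrite -(rmorph_int (real_complex R)) normc_real intr_norm. Qed.

Lemma normcC {R : rcfType} (z : R[i]) : `|z| = (Normc.normc z)%:C.
Proof. by rewrite normc_def; case: z. Qed.

Lemma ler_normc_sum {R : rcfType} {n} (F : 'I_n -> R[i]) :
  Normc.normc (\sum_i F i) <= \sum_i Normc.normc (F i).
Proof.
apply: (big_ind2 (fun z r => Normc.normc z <= r)) => //; first by rewrite Normc.normc0.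
by move=> z1 r1 z2 r2 ? ?; apply: le_trans (le_normcD _ _) _; apply: lerD.
Qed.

Lemma int_polys_coef_bounded (R : realType) (rs : seq R[i]) (B : nat -> {poly int}) :
  uniq rs -> (forall n, size (B n) <= size rs)%N ->
  (forall z, z \in rs -> exists M : R, forall n,
      Normc.normc (map_poly (intr : int -> R[i]) (B n)).[z] <= M) ->
  exists N : nat, forall n k, `|(B n)`_k| <= N%:Z.
Proof.
move=> uniq_rs size_B bounded_at; set d := size rs.
have [W coefW] := coef_from_evals uniq_rs.
have /fin_all_exists[M M_bound] : forall j : 'I_d, exists m : R, forall n,
    Normc.normc (map_poly (intr : int -> R[i]) (B n)).[rs`_j] <= m.
  by move=> j; apply: bounded_at; rewrite mem_nth.
have M_ge0 j : 0 <= M j := le_trans (normc_ge0 _) (M_bound j 0%N).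
pose G k := \sum_(j < d) M j * Normc.normc (W j k).
have G_ge0 k : 0 <= G k by rewrite sumr_ge0 // => j _; rewrite mulr_ge0 ?normc_ge0.
exists (Num.bound (\sum_k G k)) => n k.
case: (ltnP k d) => [ltkd | ledk]; last first.
  by rewrite nth_default ?normr0 // (leq_trans (size_B n) ledk).
have size_Bn : (size (map_poly (intr : int -> R[i]) (B n)) <= d)%N.
  by rewrite size_map_inj_poly ?size_B //; exact: intr_inj.
have coef_Bn := coefW _ size_Bn (Ordinal ltkd); rewrite coef_map /= in coef_Bn.
suff : (`|(B n)`_k|%:~R : R) < (Num.bound (\sum_k G k))%:R.
  by rewrite pmulrn ltr_int => /ltW.
have sumG_ge0 : 0 <= \sum_k G k by rewrite sumr_ge0.
rewrite -normc_intr coef_Bn; apply: le_lt_trans (archi_boundP sumG_ge0).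
apply: le_trans (ler_normc_sum _) _; apply: le_trans (_ : G (Ordinal ltkd) <= _).
  by apply: ler_sum => j _; rewrite Normc.normcM ler_wpM2r ?normc_ge0.
by rewrite [leRHS](bigD1 (Ordinal ltkd)) //= lerDl sumr_ge0.
Qed.

Lemma irreducible_int_poly_roots (R : rcfType) {p : {poly int}} : p \is monic ->
  irreducible_poly (map_poly (intr : int -> rat) p) ->
  exists rs : seq R[i], [/\ uniq rs, size rs = (size p).-1 &
     forall z, root (map_poly (intr : int -> R[i]) p) z = (z \in rs)].
Proof.
move=> p_monic p_irr; set pC := map_poly (intr : int -> R[i]) p.
have [rs pC_split] := closed_field_poly_normal pC.
rewrite (monicP (monic_map _ p_monic)) scale1r in pC_split.
have pC_sep : separable_poly pC.
  have -> : pC = map_poly (ratr : rat -> R[i]) (map_poly intr p).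
    by rewrite -map_poly_comp; apply: eq_map_poly => k /=; rewrite ratr_int.
  by rewrite separable_map irreducible_separable.
exists rs; split => [|| z]; last by rewrite pC_split root_prod_XsubC.
  by rewrite pC_split separable_prod_XsubC in pC_sep.
have := congr1 (fun q : {poly R[i]} => size q) pC_split.
by rewrite size_prod_XsubC size_map_inj_poly // => [-> | ]; last exact: intr_inj.
Qed.

Lemma in_Qbeta_int_polys (R : realType) (beta x : R) : in_Qbeta beta x ->
  exists P Q : {poly int}, (map_poly (intr : int -> R) Q).[beta] != 0 /\
    (map_poly (intr : int -> R) P).[beta] = x * (map_poly (intr : int -> R) Q).[beta].
Proof.
have horner_scale (c : int) (A : {poly int}) :
    (map_poly (ratr : rat -> R) (c%:~R^-1 *: map_poly intr A)).[beta] =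
    c%:~R^-1 * (map_poly (intr : int -> R) A).[beta].
  rewrite linearZ /= -map_poly_comp hornerZ fmorphV rmorph_int.
  by congr (_ * _); congr horner; apply: eq_map_poly => k /=; rewrite ratr_int.
move=> [P0 [Q0 [+ ->]]].
have [P [a a_neq0 ->]] := rat_poly_scale P0.
have [Q [b b_neq0 ->]] := rat_poly_scale Q0.
rewrite !horner_scale mulf_eq0 negb_or invr_eq0 intr_eq0 b_neq0 /= => Q_neq0.
have a_neq0' : (a%:~R : R) != 0 by rewrite intr_eq0.
exists (b%:P * P), (a%:P * Q); rewrite !rmorphM /= !map_polyC /= !hornerM !hornerC.
by split; [rewrite mulf_neq0 | field; rewrite intr_eq0 b_neq0 Q_neq0].
Qed.

Lemma bounded_affine_recurrence (R : realFieldType) (a : nat -> R) (r K : R) :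
  0 <= r < 1 -> (forall n, a n.+1 <= r * a n + K) -> exists M, forall n, a n <= M.
Proof.
move=> /andP[r_ge0 r_lt1] a_rec; exists (Num.max (a 0%N) (K / (1 - r))).
have K_le : K <= (1 - r) * Num.max (a 0%N) (K / (1 - r)).
  by rewrite mulrC -ler_pdivrMr ?subr_gt0 // le_max lexx orbT.
elim=> [|n IHn]; first by rewrite le_max lexx.
by apply: le_trans (a_rec n) _; have := ler_wpM2l r_ge0 IHn; lra.
Qed.

Lemma horner_modp_root (S : comNzRingType) (p A : {poly int}) (z : S) :
  p \is monic -> root (map_poly (intr : int -> S) p) z ->
  (map_poly (intr : int -> S) (A %% p)).[z] = (map_poly intr A).[z].
Proof.
move=> p_monic /eqP p_z.
rewrite [in RHS](Pdiv.IdomainMonic.divp_eq p_monic A) rmorphD rmorphM /=.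
by rewrite hornerD hornerM p_z mulr0 add0r.
Qed.

(* When [P(beta) = x Q(beta)] and [c] is the digit sequence of [x], the integer
   polynomial [orbit_poly p P Q c n] evaluates at [beta] to [T^n(x) Q(beta)]
   (see [horner_orbit_poly_beta]); reducing modulo [p] keeps its degree bounded. *)
Fixpoint orbit_poly (p P Q : {poly int}) (c : nat -> int) (n : nat) : {poly int} :=
  if n is m.+1 then (- ('X * orbit_poly p P Q c m) - (c m)%:P * Q) %% p else P %% p.

Lemma size_orbit_poly p P Q c n : p \is monic ->
  (size (orbit_poly p P Q c n) <= (size p).-1)%N.
Proof.
move=> /monic_neq0 p_neq0; rewrite -ltnS prednK ?size_poly_gt0 //.
by case: n => [|n]; rewrite /= ltn_modpN0.
Qed.

Lemma horner_orbit_polyS (S : comNzRingType) p P Q c n (z : S) : p \is monic ->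
  root (map_poly (intr : int -> S) p) z ->
  (map_poly (intr : int -> S) (orbit_poly p P Q c n.+1)).[z] =
  - z * (map_poly intr (orbit_poly p P Q c n)).[z] - (c n)%:~R * (map_poly intr Q).[z].
Proof.
move=> p_monic p_z; rewrite /= horner_modp_root // rmorphB rmorphN !rmorphM /=.
by rewrite map_polyX map_polyC !(hornerE, hornerN); ring.
Qed.

Lemma negT_range (R : realType) (beta l y : R) : l <= negT beta l y < l + 1.
Proof.
rewrite /negT; have := floor_itv (- beta * y - l).
by rewrite intrD => /andP[? ?]; apply/andP; split; lra.
Qed.

Lemma iter_negT_range {R : realType} (beta : R) {l x : R} n :
  l <= x < l + 1 -> l <= iter n (negT beta l) x < l + 1.
Proof. by case: n => [//|n] _; apply: negT_range. Qed.

Lemma norm_le1_of_range (R : realFieldType) (l y : R) :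
  -1 < l -> l <= 0 -> l <= y < l + 1 -> `|y| <= 1.
Proof. by move=> ? ? /andP[? ?]; rewrite ler_norml; apply/andP; split; lra. Qed.

Lemma negT_digit_bound (R : realType) (beta l y : R) :
  1 < beta -> -1 < l -> l <= 0 -> l <= y < l + 1 ->
  `|(Num.floor (- beta * y - l))%:~R : R| <= beta + 2.
Proof.
move=> beta_gt1 l_gtN1 l_le0 /andP[y_ge y_lt].
have := floor_itv (- beta * y - l); rewrite intrD => /andP[? ?].
have ? : 0 < y + 1 by lra.
have ? : 0 < 1 - y by lra.
have ? : - beta <= - beta * y <= beta by apply/andP; split; nra.
by rewrite ler_norml; apply/andP; split; lra.
Qed.

Section DigitOrbit.

Set Implicit Arguments.
Unset Strict Implicit.

Variables (R : realType) (beta l x : R) (p P Q : {poly int}).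
Hypotheses (beta_gt1 : 1 < beta) (l_gtN1 : -1 < l) (l_le0 : l <= 0).
Hypotheses (x_range : l <= x < l + 1) (p_monic : p \is monic).
Hypotheses (p_beta : root (map_poly (intr : int -> R) p) beta).
Hypothesis (PQ_x : (map_poly (intr : int -> R) P).[beta] =
                   x * (map_poly (intr : int -> R) Q).[beta]).

Local Notation B := (orbit_poly p P Q (negdigit beta l x)).
Local Notation Qbeta := (map_poly (intr : int -> R) Q).[beta].

Lemma horner_orbit_poly_beta n :
  (map_poly (intr : int -> R) (B n)).[beta] = iter n (negT beta l) x * Qbeta.
Proof.
elim: n => [|n IHn]; first by rewrite /= horner_modp_root.
by rewrite horner_orbit_polyS // IHn /= /negT; ring.
Qed.

Lemma orbit_poly_bounded_at_beta n :
  Normc.normc (map_poly (intr : int -> R[i]) (B n)).[beta%:C] <= `|Qbeta|.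
Proof.
have -> : map_poly (intr : int -> R[i]) (B n) = map_poly (real_complex R) (map_poly intr (B n)).
  by rewrite -map_poly_comp; apply: eq_map_poly => k /=; rewrite rmorph_int.
rewrite horner_map normc_real horner_orbit_poly_beta normrM ler_piMl //.
exact: norm_le1_of_range (iter_negT_range beta n x_range).
Qed.

Lemma orbit_poly_bounded_at_conjugate (z : R[i]) :
  root (map_poly (intr : int -> R[i]) p) z -> Normc.normc z < 1 ->
  exists M, forall n, Normc.normc (map_poly (intr : int -> R[i]) (B n)).[z] <= M.
Proof.
move=> p_z z_lt1; set Qz := Normc.normc (map_poly (intr : int -> R[i]) Q).[z].
apply: (@bounded_affine_recurrence _ _ (Normc.normc z) ((beta + 2) * Qz)).
  by rewrite z_lt1 normc_ge0.
move=> n; rewrite horner_orbit_polyS //; apply: le_trans (le_normcD _ _) _.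
rewrite normcN !Normc.normcM normcN normc_intr lerD2l ler_wpM2r ?normc_ge0 //.
by rewrite intr_norm; apply: negT_digit_bound (iter_negT_range beta n x_range).
Qed.

Hypothesis p_irr : irreducible_poly (map_poly (intr : int -> rat) p).
Hypothesis conj_small : forall z : R[i], root (map_poly (intr : int -> R[i]) p) z ->
  z != beta%:C -> `|z| < 1.

Lemma orbit_poly_coef_bounded : exists N : nat, forall n k, `|(B n)`_k| <= N%:Z.
Proof.
have [rs [uniq_rs size_rs roots_rs]] := irreducible_int_poly_roots R p_monic p_irr.
apply: int_polys_coef_bounded uniq_rs _ _ => [n | z].
  by rewrite size_rs size_orbit_poly.
rewrite -roots_rs => p_z; have [->|z_neq_beta] := eqVneq z beta%:C.
  by exists `|Qbeta|; apply: orbit_poly_bounded_at_beta.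
apply: orbit_poly_bounded_at_conjugate => //.
by have := conj_small p_z z_neq_beta; rewrite normcC -[1]/(1%:C) ltcR.
Qed.

End DigitOrbit.

Lemma iter_collision_eventually_periodic (T : Type) (f : T -> T) (g : T -> int) x i j :
  (i < j)%N -> iter i f x = iter j f x -> eventually_periodic (fun n => g (iter n f x)).
Proof.
move=> ltij eq_ij; exists i, (j - i)%N; split; first by rewrite subn_gt0.
move=> n le_in; congr g.
have -> : (n + (j - i) = (n - i) + j)%N by lia.
by rewrite iterD -eq_ij -iterD subnK.
Qed.

Local Close Scope complex_scope.

Theorem mainTheorem7 (R : realType) (beta l : R) :
  pisot beta -> -1 < l -> l <= 0 ->
  forall x : R, l <= x -> x < l + 1 -> in_Qbeta beta x ->
  eventually_periodic (negdigit beta l x).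
Proof.
move=> [beta_gt1 [p [p_monic [p_irr [p_beta conj_small]]]]] l_gtN1 l_le0 x x_ge x_lt.
move=> /in_Qbeta_int_polys[P [Q [Q_neq0 PQ_x]]].
have x_range : l <= x < l + 1 by rewrite x_ge x_lt.
have [N coef_bound] := orbit_poly_coef_bounded beta_gt1 l_gtN1 l_le0 x_range p_monic
  p_beta PQ_x p_irr conj_small.
have [i [j [ltij eq_orbit]]] :=
  bounded_int_polys_repeat (fun n => size_orbit_poly p P Q _ n p_monic) coef_bound.
apply: (iter_collision_eventually_periodic (fun y => Num.floor (- beta * y - l)) ltij).
apply: (mulIf Q_neq0).
by rewrite -!(horner_orbit_poly_beta l p_monic p_beta PQ_x) eq_orbit.
Qed.
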